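(* Let $x\in(0,1)$ and let $((a_n,\varepsilon_n))_{n\ge1}$ be an infinite OOCF expansion of $x$. Then for every $n\ge1$, $x$ lies in the closed interval with endpoints $p_n/q_n$ and $p_n''/q_n''$; if $x$ is irrational it lies strictly between them.
   Context: Admissible digits: $D=\{(1,1)\}\cup\{(a,\varepsilon): a\in\mathbb Z,\ a\ge2,\ \varepsilon\in\{-1,1\}\}$. For integers $k\ge1$ put $B(k+1,-1)=\left[\frac{k-1}{k},\frac{2k-1}{2k+1}\right]$ and $B(k,1)=\left[\frac{2k-1}{2k+1},\frac{k}{k+1}\right]$. The OOCF map $T:[0,1]\to[0,1]$ is $T(x)=\frac{kx-(k-1)}{k-(k+1)x}$ for $x\in B(k+1,-1)$, $T(x)=\frac{k-(k+1)x}{kx-(k-1)}$ for $x\in B(k,1)$ ($k\ge1$; formulas agree at common endpoints), and $T(1)=1$. An infinite OOCF expansion of $x\in[0,1]$ is a sequence $((a_n,\varepsilon_n))_{n\ge1}$ in $D$ with $T^{n-1}(x)\in B(a_n,\varepsilon_n)$ and $T^{n-1}(x)\neq1$ for all $n\ge1$. For $n\ge1$, with $M=\begin{pmatrix}1&-1\\1&0\end{pmatrix}$, $J=\begin{pmatrix}2&-1\\1&0\end{pmatrix}$, $E(a,\varepsilon)=\begin{pmatrix}a&\varepsilon\\1&0\end{pmatrix}$, define integers by $M E(a_1,\varepsilon_1) J\cdots J E(a_n,\varepsilon_n) J=\begin{pmatrix}p_n&-p_n'\\ q_n&-q_n'\end{pmatrix}$ and $\begin{pmatrix}p_n''\\ q_n''\end{pmatrix}=M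 E(a_1,\varepsilon_1) J\cdots J E(a_n,\varepsilon_n)\begin{pmatrix}1\\1\end{pmatrix}$. Thus $p_n/q_n$ is the finite continued fraction $1-\cfrac{1}{a_1+\cfrac{\varepsilon_1}{2-\cfrac{1}{\ddots\ \cfrac{\varepsilon_{n-1}}{2-\cfrac{1}{a_n+\varepsilon_n/2}}}}}$ (principal convergent) and $p_n''/q_n''$ is the same with last term $a_n+\varepsilon_n$ (pseudo-convergent). *)

From Stdlib Require Import Reals ZArith.
Open Scope R_scope.

Definition admissible (a e : Z) : Prop :=
  (a = 1%Z /\ e = 1%Z) \/ ((2 <= a)%Z /\ (e = (-1)%Z \/ e = 1%Z)).

Definition inB (a e : Z) (y : R) : Prop :=
  (e = (-1)%Z /\ exists k : Z, (1 <= k)%Z /\ a = (k + 1)%Z /\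
     (IZR k - 1) / IZR k <= y <= (2 * IZR k - 1) / (2 * IZR k + 1))
  \/
  (e = 1%Z /\ exists k : Z, (1 <= k)%Z /\ a = k /\
     (2 * IZR k - 1) / (2 * IZR k + 1) <= y <= IZR k / (IZR k + 1)).

(* For x ∈ [0,1), the integer k >= 1 with
   x ∈ [(k-1)/k, k/(k+1)) = B(k+1,-1) ∪ B(k,1) is floor(1/(1-x));
   on B(k+1,-1) (x <= (2k-1)/(2k+1)) and on B(k,1) the two formulas apply
   (they agree at the common endpoints, so this choice is immaterial). *)
Definition T (x : R) : R :=
  if Req_EM_T x 1 then 1 else
  let k := IZR (Int_part (1 / (1 - x))) in
  if Rle_dec x ((2 * k - 1) / (2 * k + 1))
  then (k * x - (k - 1)) / (k - (k + 1) * x)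
  else (k - (k + 1) * x) / (k * x - (k - 1)).

Record mat2 := Mat2 { m11 : Z; m12 : Z; m21 : Z; m22 : Z }.

Definition mmul (A B : mat2) : mat2 :=
  Mat2 (m11 A * m11 B + m12 A * m21 B)%Z (m11 A * m12 B + m12 A * m22 B)%Z
       (m21 A * m11 B + m22 A * m21 B)%Z (m21 A * m12 B + m22 A * m22 B)%Z.

Definition Mmat : mat2 := Mat2 1 (-1) 1 0.
Definition Jmat : mat2 := Mat2 2 (-1) 1 0.
Definition Emat (a e : Z) : mat2 := Mat2 a e 1 0.

(* Digits are given by sequences a, eps : nat -> Z, indexed from 1
   (the values at index 0 are irrelevant).
   prodMEJ a eps n = M E(a_1,e_1) J ... J E(a_n,e_n) J   (n >= 0; = M for n = 0). *)
Fixpoint prodMEJ (a eps : nat -> Z) (n : nat) : mat2 :=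
  match n with
  | O => Mmat
  | S m => mmul (mmul (prodMEJ a eps m) (Emat (a (S m)) (eps (S m)))) Jmat
  end.

Definition p_ (a eps : nat -> Z) (n : nat) : Z := m11 (prodMEJ a eps n).
Definition q_ (a eps : nat -> Z) (n : nat) : Z := m21 (prodMEJ a eps n).

Definition pp_ (a eps : nat -> Z) (n : nat) : Z :=
  let P := mmul (prodMEJ a eps (pred n)) (Emat (a n) (eps n)) in (m11 P + m12 P)%Z.
Definition qq_ (a eps : nat -> Z) (n : nat) : Z :=
  let P := mmul (prodMEJ a eps (pred n)) (Emat (a n) (eps n)) in (m21 P + m22 P)%Z.

Definition OOCF_expansion (x : R) (a eps : nat -> Z) : Prop :=
  forall n : nat, (1 <= n)%nat ->
    admissible (a n) (eps n) /\
    inB (a n) (eps n) (Nat.iter (pred n) T x) /\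
    Nat.iter (pred n) T x <> 1.

Definition irrational (x : R) : Prop :=
  ~ exists (p q : Z), q <> 0%Z /\ x = IZR p / IZR q.

From Stdlib Require Import Reals ZArith Lra Lia Psatz.
Open Scope R_scope.

(* On the cylinder B(a,e) the map T inverts the Moebius relation
   1 - z = (1 + T z) / (a + e + a T z), which in homogeneous coordinates says that
   E(a,e) J maps (1, 1 - T z) to a positive multiple of (1, 1 - z).  Iterating,
   x = (α + β u) / (γ + δ u) with u = 1 - T^n x ∈ [0,1] and (α β; γ δ) = M E J ... E J.
   Since J (1,1) = (1,1), the two convergents are α/γ and (α+β)/(γ+δ), with positive
   denominators, and x is a weighted mediant of them; a weighted mediant lies between
   its two fractions, strictly unless it equals one of them, which irrationality
   excludes. *)

Lemma Rdiv_le_iff (a b c : R) : 0 < b -> (a / b <= c <-> a <= c * b).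
Proof.
  intros Hb. replace a with (a / b * b) at 2 by (field; lra).
  split; intros H; [apply Rmult_le_compat_r; lra | apply Rmult_le_reg_r with b; lra].
Qed.

Lemma Rle_div_iff (a b c : R) : 0 < b -> (c <= a / b <-> c * b <= a).
Proof.
  intros Hb. replace a with (a / b * b) at 2 by (field; lra).
  split; intros H; [apply Rmult_le_compat_r; lra | apply Rmult_le_reg_r with b; lra].
Qed.

Lemma Int_part_eq (r : R) (k : Z) : IZR k <= r < IZR k + 1 -> Int_part r = k.
Proof.
  intros Hr. unfold Int_part.
  rewrite <- (tech_up r (k + 1)); [ring | rewrite plus_IZR; lra ..].
Qed.

Lemma Int_part_inv_one_sub (k : Z) (z : R) :
  IZR k * (1 - z) <= 1 < (IZR k + 1) * (1 - z) -> Int_part (1 / (1 - z)) = k.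
Proof.
  intros Hz. assert (Hpos : 0 < 1 - z) by nra.
  apply Int_part_eq. split.
  - apply Rle_div_iff; lra.
  - apply Rnot_le_lt. rewrite Rle_div_iff; lra.
Qed.

Lemma T_left (k : Z) (z : R) : (1 <= k)%Z ->
  IZR k * (1 - z) <= 1 -> 2 <= (2 * IZR k + 1) * (1 - z) ->
  T z = (IZR k * z - (IZR k - 1)) / (IZR k - (IZR k + 1) * z).
Proof.
  intros Hk%IZR_le H1 H2. unfold T.
  destruct (Req_EM_T z 1) as [->|_]; [lra|].
  rewrite (Int_part_inv_one_sub k z) by nra.
  destruct Rle_dec as [|Hmid]; [reflexivity|].
  exfalso; apply Hmid, Rle_div_iff; lra.
Qed.

(* At the endpoint z = k/(k+1), T uses the branch of B(k+2,-1); both formulas give 0. *)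
Lemma T_right (k : Z) (z : R) : (1 <= k)%Z ->
  (2 * IZR k + 1) * (1 - z) <= 2 -> 1 <= (IZR k + 1) * (1 - z) ->
  T z = (IZR k - (IZR k + 1) * z) / (IZR k * z - (IZR k - 1)).
Proof.
  intros Hk H1 H2. pose proof (IZR_le _ _ Hk) as Hk'.
  destruct (Req_dec ((IZR k + 1) * (1 - z)) 1) as [Hend|Hint].
  - rewrite (T_left (k + 1)) by (rewrite ?plus_IZR; lia || nra).
    rewrite plus_IZR.
    replace ((IZR k + 1) * z - (IZR k + 1 - 1)) with 0 by lra.
    replace (IZR k - (IZR k + 1) * z) with 0 by lra.
    unfold Rdiv; ring.
  - unfold T. destruct (Req_EM_T z 1) as [->|_]; [lra|].
    rewrite (Int_part_inv_one_sub k z) by nra.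
    destruct Rle_dec as [Hmid|]; [|reflexivity].
    apply Rle_div_iff in Hmid; [|lra].
    replace (IZR k * z - (IZR k - 1)) with (IZR k - (IZR k + 1) * z) by lra.
    field. nra.
Qed.

Lemma inB_bounds (a e : Z) (z : R) : inB a e z ->
  (exists k, (1 <= k)%Z /\ a = (k + 1)%Z /\ e = (-1)%Z /\
     IZR k * (1 - z) <= 1 /\ 2 <= (2 * IZR k + 1) * (1 - z)) \/
  (exists k, (1 <= k)%Z /\ a = k /\ e = 1%Z /\
     (2 * IZR k + 1) * (1 - z) <= 2 /\ 1 <= (IZR k + 1) * (1 - z)).
Proof.
  intros [[He [k [Hk [Ha [H1 H2]]]]] | [He [k [Hk [Ha [H1 H2]]]]]];
    pose proof (IZR_le _ _ Hk) as Hk';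
    rewrite Rdiv_le_iff in H1 by lra; rewrite Rle_div_iff in H2 by lra.
  - left; exists k; repeat split; auto; nra.
  - right; exists k; repeat split; auto; nra.
Qed.

Lemma inB_unit_interval (a e : Z) (z : R) : inB a e z -> 0 <= 1 - z <= 1.
Proof.
  intros [(k & Hk & _ & _ & H1 & H2) | (k & Hk & _ & _ & H1 & H2)]%inB_bounds;
    apply IZR_le in Hk; split; nra.
Qed.

Lemma T_cylinder (a e : Z) (z : R) : inB a e z ->
  (1 - z) * (IZR a + IZR e + IZR a * T z) = 1 + T z.
Proof.
  intros [(k & Hk & -> & -> & H1 & H2) | (k & Hk & -> & -> & H1 & H2)]%inB_bounds;
    pose proof (IZR_le _ _ Hk) as Hk'.
  - rewrite (T_left k z), plus_IZR by assumption. field. nra.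
  - rewrite (T_right k z) by assumption. field. nra.
Qed.

Definition mat_num (A : mat2) (u : R) : R := IZR (m11 A) + IZR (m12 A) * u.
Definition mat_den (A : mat2) (u : R) : R := IZR (m21 A) + IZR (m22 A) * u.

Lemma mat_num_den_mulEJ (A : mat2) (a e : Z) (z t : R) :
  (1 - z) * (IZR a + IZR e + IZR a * t) = 1 + t ->
  let B := mmul (mmul A (Emat a e)) Jmat in
  mat_num B (1 - t) = (IZR a + IZR e + IZR a * t) * mat_num A (1 - z) /\
  mat_den B (1 - t) = (IZR a + IZR e + IZR a * t) * mat_den A (1 - z).
Proof.
  intros Hzt. destruct A as [al be ga de].
  unfold mat_num, mat_den; cbn.
  repeat rewrite ?plus_IZR, ?mult_IZR.
  split; apply Rminus_diag_uniq.
  - transitivity (IZR be * ((1 + t) - (1 - z) * (IZR a + IZR e + IZR a * t))); [ring|].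
    rewrite Hzt; ring.
  - transitivity (IZR de * ((1 + t) - (1 - z) * (IZR a + IZR e + IZR a * t))); [ring|].
    rewrite Hzt; ring.
Qed.

Lemma prodMEJ_invariant (x : R) (a eps : nat -> Z) (n : nat) :
  OOCF_expansion x a eps ->
  let y := Nat.iter n T x in
  x * mat_den (prodMEJ a eps n) (1 - y) = mat_num (prodMEJ a eps n) (1 - y).
Proof.
  intros Hexp; induction n as [|n IH]; cbv zeta in *.
  - unfold mat_num, mat_den; cbn; ring.
  - destruct (Hexp (S n)) as (_ & Hcyl & _); [lia|]; cbn [pred] in Hcyl.
    destruct (mat_num_den_mulEJ (prodMEJ a eps n) _ _ _ _ (T_cylinder _ _ _ Hcyl))
      as [Hnum Hden].
    change (Nat.iter (S n) T x) with (T (Nat.iter n T x)); cbn [prodMEJ].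
    rewrite Hnum, Hden, <- IH. ring.
Qed.

Lemma admissible_bounds (a e : Z) : admissible a e -> (1 <= a)%Z /\ (1 <= a + e)%Z.
Proof. unfold admissible; lia. Qed.

Lemma prodMEJ_den_pos (a eps : nat -> Z) (n : nat) :
  (forall m, (1 <= m)%nat -> admissible (a m) (eps m)) ->
  let P := prodMEJ a eps n in
  (0 < m21 P)%Z /\ (0 < m21 P + m22 P)%Z /\ (m22 P <= 0)%Z.
Proof.
  intros Had; induction n as [|n IH]; cbv zeta in *; [cbn; lia|].
  destruct (admissible_bounds _ _ (Had (S n) ltac:(lia))).
  cbn [prodMEJ]; destruct (prodMEJ a eps n); cbn in *; nia.
Qed.

(* [J (1,1) = (1,1)], so the pseudo-convergent is read off [prodMEJ] as well. *)
Lemma pseudo_convergent_eq (a eps : nat -> Z) (n : nat) : (1 <= n)%nat ->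
  let P := prodMEJ a eps n in
  pp_ a eps n = (m11 P + m12 P)%Z /\ qq_ a eps n = (m21 P + m22 P)%Z.
Proof.
  intros Hn; destruct n as [|n]; [lia|].
  unfold pp_, qq_; cbn [prodMEJ pred]; destruct (prodMEJ a eps n); cbn; lia.
Qed.

Lemma mediant_sub_mul_nonpos (x w N1 D1 N2 D2 : R) :
  0 < D1 -> 0 < D2 -> 0 <= w <= 1 ->
  x * ((1 - w) * D1 + w * D2) = (1 - w) * N1 + w * N2 ->
  (x - N1 / D1) * (x - N2 / D2) <= 0.
Proof.
  intros HD1 HD2 Hw Hx.
  set (r1 := N1 / D1); set (r2 := N2 / D2).
  replace N1 with (r1 * D1) in Hx by (unfold r1; field; lra).
  replace N2 with (r2 * D2) in Hx by (unfold r2; field; lra).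
  set (S := (1 - w) * D1 + w * D2) in Hx.
  assert (HS : 0 < S) by (unfold S; nra).
  assert (Hprod : (x - r1) * (x - r2) * (S * S) = - (w * (1 - w) * D1 * D2) * (r1 - r2) ^ 2).
  { transitivity ((x * S - r1 * S) * (x * S - r2 * S)); [ring|].
    rewrite Hx; unfold S; ring. }
  assert (0 <= w * (1 - w) * D1 * D2) by (repeat apply Rmult_le_pos; lra).
  assert (0 <= (r1 - r2) ^ 2) by apply pow2_ge_0.
  apply Rmult_le_reg_r with (S * S); [nra|].
  rewrite Hprod, Rmult_0_l. nra.
Qed.

Lemma Rmin_Rmax_of_sub_mul_nonpos (x r1 r2 : R) :
  (x - r1) * (x - r2) <= 0 -> Rmin r1 r2 <= x <= Rmax r1 r2.
Proof. unfold Rmin, Rmax; destruct Rle_dec; intros; split; nra. Qed.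

Lemma Rmin_Rmax_strict (x r1 r2 : R) :
  Rmin r1 r2 <= x <= Rmax r1 r2 -> x <> r1 -> x <> r2 -> Rmin r1 r2 < x < Rmax r1 r2.
Proof. unfold Rmin, Rmax; destruct Rle_dec; intros; lra. Qed.

Lemma irrational_neq_ratio (x : R) (p q : Z) : irrational x -> q <> 0%Z -> x <> IZR p / IZR q.
Proof. intros Hirr Hq Hx; apply Hirr; now exists p, q. Qed.

Theorem lemma3p5 (x : R) (a eps : nat -> Z) :
  0 < x < 1 ->
  OOCF_expansion x a eps ->
  forall n : nat, (1 <= n)%nat ->
    let r := IZR (p_ a eps n) / IZR (q_ a eps n) in
    let r' := IZR (pp_ a eps n) / IZR (qq_ a eps n) in
    (Rmin r r' <= x <= Rmax r r') /\
    (irrational x -> Rmin r r' < x < Rmax r r').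
Proof.
  intros _ Hexp n Hn.
  destruct (Hexp (S n)) as (_ & Hcyl & _); [lia|].
  pose proof (inB_unit_interval _ _ _ Hcyl) as Hu; cbn [pred] in Hu.
  pose proof (prodMEJ_invariant x a eps n Hexp) as Hinv.
  destruct (pseudo_convergent_eq a eps n Hn) as [-> ->].
  destruct (prodMEJ_den_pos a eps n (fun m Hm => proj1 (Hexp m Hm))) as (Hq & Hqq & _).
  unfold p_, q_; cbv zeta in *; set (u := 1 - Nat.iter n T x) in *.
  destruct (prodMEJ a eps n) as [al be ga de]; unfold mat_num, mat_den in Hinv; cbn in *.
  assert (Hbetween : (x - IZR al / IZR ga) * (x - IZR (al + be) / IZR (ga + de)) <= 0).
  { apply (mediant_sub_mul_nonpos x u); try (apply IZR_lt; assumption); [lra|].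
    rewrite !plus_IZR.
    replace ((1 - u) * IZR ga + u * (IZR ga + IZR de)) with (IZR ga + IZR de * u) by ring.
    rewrite Hinv; ring. }
  apply Rmin_Rmax_of_sub_mul_nonpos in Hbetween.
  split; [exact Hbetween|].
  intros Hirr; apply Rmin_Rmax_strict; [exact Hbetween | ..];
    apply irrational_neq_ratio; lia || assumption.
Qed.
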